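(* Let $\nu_n,\nu\in\Delta(V)$ with $\nu_n\to\nu$ weakly, and let $p_n,p\in V$ with $p_n\to p$. Then $\pi(c,\nu,p)\ge\limsup_{n\to\infty}\pi(c,\nu_n,p_n)$.
   Context: $V\subset\mathbb{R}$ is compact and $c:V\to\mathbb{R}$ is continuous with $v-c(v)\ge0$ on $V$. $\Delta(V)$ denotes Borel probability measures on $V$. For $\nu\in\Delta(V)$ and $p\in V$, $\pi(c,\nu,p)=\int_{\{v\ge p\}}(p-c(v))\nu(dv)$. *)

From HB Require Import structures.
From mathcomp Require Import all_boot all_order all_algebra.
From mathcomp Require Import all_classical all_reals all_analysis.
Set Implicit Arguments. Unset Strict Implicit. Unset Printing Implicit Defensive.
Import Order.TTheory GRing.Theory Num.Theory.
Import numFieldNormedType.Exports.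
Local Open Scope classical_set_scope.
Local Open Scope ring_scope.

(* Delta(V): Borel probability measures on R concentrated on V
   (equivalently, Borel probability measures on V). *)
Definition in_Delta (R : realType) (V : set R) (nu : probability R R) : Prop :=
  nu (~` V) = 0%E.

(* Weak convergence on V: integrals of every continuous (hence bounded, V being
   compact) real function on V converge. *)
Definition weak_conv (R : realType) (V : set R)
    (nu_ : nat -> probability R R) (nu : probability R R) : Prop :=
  forall f : R -> R, {within V, continuous f} ->
    ((fun n => \int[nu_ n]_(x in V) (f x)%:E) @ \oo --> \int[nu]_(x in V) (f x)%:E)%E.

Definition profit (R : realType) (V : set R) (c : R -> R)
    (nu : probability R R) (p : R) : \bar R :=
  (\int[nu]_(v in V `&` [set v | (p <= v)%R]) (p - c v)%R%:E)%E.

From HB Require Import structures.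
From mathcomp Require Import all_boot all_order all_algebra.
From mathcomp Require Import all_classical all_reals all_analysis.
From mathcomp Require Import measurable_realfun lra.
Import Order.TTheory GRing.Theory Num.Theory.
Import numFieldNormedType.Exports.
Local Open Scope classical_set_scope.
Local Open Scope ring_scope.

(* The payoff (q, v) |-> 1{q <= v} (q - c v) is discontinuous on the diagonal
   but, as q - c q >= 0, upper semicontinuous. Concretely, for prices q within
   d/2 of p it lies below envelope + |q - p|, where the continuous envelope is
   p - c v for v >= p and, for v < p, the surplus v - c v times a ramp rising
   on [p - d, p - d/2]. Weak convergence then bounds the limsup of profits by
   the integral of the envelope under nu, which exceeds the profit at p by at
   most (max surplus) * nu [p - d, p[, and this vanishes as d -> 0. *)

Section ramp.
Context {R : realType}.
Implicit Types a b v : R.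

Definition ramp a b v : R := Num.min 1 (Num.max 0 ((v - a) / (b - a))).

Lemma ramp_ge0 a b v : 0 <= ramp a b v.
Proof. by rewrite /ramp le_min ler01 le_max lexx. Qed.

Lemma ramp_le1 a b v : ramp a b v <= 1.
Proof. by rewrite /ramp ge_min lexx. Qed.

Lemma ramp_eq0 a b v : a < b -> v <= a -> ramp a b v = 0.
Proof.
move=> ab va; rewrite /ramp (max_idPl _) ?(min_idPr _) ?ler01 //.
by rewrite ler_pdivrMr ?subr_gt0 // mul0r subr_le0.
Qed.

Lemma ramp_eq1 a b v : a < b -> b <= v -> ramp a b v = 1.
Proof.
move=> ab bv; have ramp_ge1 : 1 <= (v - a) / (b - a).
  by rewrite ler_pdivlMr ?subr_gt0 // mul1r lerD2r.
by rewrite /ramp (max_idPr _) ?(min_idPl _) // (le_trans ler01).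
Qed.

Lemma continuous_ramp a b : continuous (ramp a b).
Proof.
move=> x.
apply: (continuous_min (f := cst 1) (g := fun v => Num.max 0 ((v - a) / (b - a)))).
  exact: cvg_cst.
apply: (continuous_max (f := cst 0) (g := fun v => (v - a) / (b - a))).
  exact: cvg_cst.
by apply: cvgM; [apply: cvgB; [exact: cvg_id|exact: cvg_cst]|exact: cvg_cst].
Qed.

End ramp.

Lemma continuous_compact_ubound {R : realType} (V : set R) (f : R -> R) :
  compact V -> {within V, continuous f} ->
  exists2 M, 0 <= M & forall v, V v -> f v <= M.
Proof.
move=> cV fc; have /compact_bounded[M [_ fM]] := continuous_compact fc cV.
exists (`|M| + 1) => [|v Vv]; first by rewrite addr_ge0.
apply: le_trans (ler_norm _) _; apply: fM; last by exists v.
by rewrite (le_lt_trans (ler_norm M)) // ltrDl.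
Qed.

Lemma finite_measure_continuous_compact_integrable {R : realType}
    (mu : {finite_measure set R -> \bar R}) (V : set R) (f : R -> R) :
  compact V -> {within V, continuous f} -> mu.-integrable V (EFin \o f).
Proof.
move=> cV fc; have mV := compact_measurable cV.
apply: measurable_bounded_integrable => //.
- by rewrite ltey_eq fin_num_measure.
- exact: subspace_continuous_measurable_fun.
- have /compact_bounded[M [_ fM]] := continuous_compact fc cV.
  exists M; split; rewrite ?num_real // => x Mx y Vy.
  by apply: (fM x Mx); exists y.
Qed.

Lemma le_limn_esup {R : realType} (u v : (\bar R)^nat) :
  (\forall n \near \oo, u n <= v n)%E -> (limn_esup u <= limn_esup v)%E.
Proof.
move=> [N _ uv]; rewrite !limn_esup_lim.
apply: lee_lim; [exact: is_cvg_esups|exact: is_cvg_esups|].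
near=> n; apply: ge_ereal_sup => _ [k /= nk <-].
apply: le_trans (uv k _) _; first by rewrite /= (leq_trans _ nk) //; near: n; exists N.
by apply: ereal_sup_ubound; exists k.
Unshelve. all: by end_near. Qed.

Lemma measure_itv_left_cvg0 {R : realType}
    (mu : {finite_measure set R -> \bar R}) (p : R) :
  mu `[p - k.+1%:R^-1, p[%classic @[k --> \oo] --> 0%E.
Proof.
pose S k : set R := `[p - k.+1%:R^-1, p[%classic.
have S0 : \bigcap_k S k = set0.
  apply/seteqP; split => // v Sv.
  have /andP[_ vp] : (p - 1^-1 <= v < p) by have := Sv 0%N I; rewrite /S /= in_itv.
  have [k vkp] := ltr_add_invr vp.
  have := Sv k I; rewrite /S /= in_itv /= => /andP[pkv _].
  by rewrite lerBlDr leNgt vkp in pkv.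
have := @nonincreasing_cvg_mu _ _ _ mu S; rewrite S0 measure0; apply.
- by rewrite ltey_eq fin_num_measure //; exact: measurable_itv.
- by move=> k; exact: measurable_itv.
- exact: measurable0.
- move=> n k nk; apply/subsetPset => v; rewrite /S /= !in_itv /= => /andP[nv ->].
  rewrite andbT (le_trans _ nv) // lerD2l lerN2 lef_pV2 ?posrE ?ltr0Sn //.
  by rewrite ler_nat.
Qed.

Section envelope.
Context {R : realType} (c : R -> R).

Definition payoff (q v : R) : R := if q <= v then q - c v else 0.

Definition envelope (p d v : R) : R :=
  - Num.max (v - p) 0 + (v - c v) * ramp (p - d) (p - d / 2) v.

Lemma payoff_le_envelope (p q d v : R) :
  0 < d -> 0 <= v - c v -> `|q - p| < d / 2 ->
  payoff q v <= envelope p d v + `|q - p|.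
Proof.
move=> d0 surplus_ge0 qp.
have := ler_norm (q - p); have := ler_norm (p - q); rewrite distrC => le_pq le_qp.
rewrite /payoff /envelope; case: ifPn => [qv | ]; last rewrite -ltNge => vq.
- rewrite ramp_eq1; [|lra|lra].
  have : Num.max (v - p) 0 <= v - q + `|q - p| by rewrite ge_max; apply/andP; split; lra.
  lra.
- have : Num.max (v - p) 0 <= `|q - p| by rewrite ge_max normr_ge0 andbT; lra.
  have := mulr_ge0 surplus_ge0 (ramp_ge0 (p - d) (p - d / 2) v); lra.
Qed.

Lemma envelope_le_payoff (p d v W : R) :
  0 < d -> 0 <= v - c v -> v - c v <= W ->
  envelope p d v <= payoff p v + W * \1_`[p - d, p[ v.
Proof.
move=> d0 surplus_ge0 surplusW; rewrite /payoff /envelope indicE mem_setE in_itv /=.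
case: ifPn => [pv | ]; last rewrite -ltNge => vp.
- rewrite ramp_eq1; [|lra|lra].
  rewrite (max_idPl _) ?subr_ge0 // ltNge pv andbF mulr0; lra.
- rewrite (max_idPr _) ?subr_le0 ?(ltW vp) // vp andbT oppr0 add0r.
  have [dv | vd] := leP (p - d) v; rewrite /= ?mulr1 ?mulr0 add0r.
  + by rewrite -[leRHS]mulr1 ler_pM // ?ramp_ge0 ?ramp_le1.
  + by rewrite ramp_eq0 ?mulr0 //; lra.
Qed.

End envelope.

Section profit_envelope.
Context {R : realType} {V : set R} {c : R -> R}.
Hypotheses (cV : compact V) (cc : {within V, continuous c})
  (surplus_ge0 : forall v, V v -> 0 <= v - c v).

Let mV : measurable V := compact_measurable cV.

Lemma within_continuous_sub (f : R -> R) :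
  continuous f -> {within V, continuous (f \- c)}.
Proof. by move=> fc x; apply: cvgB (cc x); exact: continuous_subspaceT. Qed.

Lemma profitE (P : probability R R) (q : R) :
  profit V c P q = (\int[P]_(v in V) (payoff c q v)%:E)%E.
Proof.
rewrite /profit integral_mkcondr; apply: eq_integral => v _.
rewrite patchE /payoff; case: (boolP (q <= v)) => qv; first by rewrite mem_set.
by rewrite memNset //=; apply/negP.
Qed.

Lemma integrable_payoff (mu : {finite_measure set R -> \bar R}) (q : R) :
  mu.-integrable V (EFin \o payoff c q).
Proof.
have mc := subspace_continuous_measurable_fun mV cc.
have qc_int : mu.-integrable V (EFin \o (cst q \- c)).
  apply: finite_measure_continuous_compact_integrable cV _.
  exact: within_continuous_sub (cst q) (fun=> cvg_cst q).
apply: (le_integrable mV _ _ qc_int).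
- apply/measurable_EFinP/measurable_fun_if => //.
  + exact: measurable_fun_ler.
  + apply: (measurable_funS mV (@subIsetl _ _ _)).
    exact: measurable_funB mc.
- by move=> v _; rewrite /= /payoff; case: ifP; rewrite ?normr0 lee_fin ?normr_ge0.
Qed.

Lemma continuous_envelope (p d : R) : {within V, continuous (envelope c p d)}.
Proof.
move=> x; apply: cvgD.
  apply: continuous_subspaceT x => y; apply: cvgN.
  apply: (continuous_max (f := fun v => v - p) (g := cst 0)); last exact: cvg_cst.
  by apply: cvgB; [exact: cvg_id | exact: cvg_cst].
apply: cvgM; first exact: (within_continuous_sub id (fun=> cvg_id)) x.
exact: continuous_subspaceT (continuous_ramp _ _) x.
Qed.

Lemma integrable_envelope (mu : {finite_measure set R -> \bar R}) (p d : R) :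
  mu.-integrable V (EFin \o envelope c p d).
Proof.
exact: finite_measure_continuous_compact_integrable cV (continuous_envelope p d).
Qed.

Lemma profit_le_integral_envelope (P : probability R R) (p q d : R) :
  0 < d -> `|q - p| < d / 2 ->
  (profit V c P q <= \int[P]_(v in V) (envelope c p d v)%:E + `|q - p|%:E)%E.
Proof.
move=> d0 qp; rewrite profitE.
have cst_int : P.-integrable V (fun=> `|q - p|%:E).
  exact: finite_measure_integrable_cst.
apply: (@le_trans _ _ (\int[P]_(v in V) ((envelope c p d v)%:E + `|q - p|%:E))%E).
  apply: le_integral => //; first exact: integrable_payoff.
    exact: integrableD (integrable_envelope P p d) cst_int.
  by move=> v /set_mem Vv; rewrite lee_fin payoff_le_envelope ?surplus_ge0.
rewrite integralD //; last exact: integrable_envelope.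
rewrite leeD2l // integral_cst // -[leRHS]mule1 lee_wpmul2l ?lee_fin //.
exact: probability_le1.
Qed.

Lemma integral_envelope_le_profit (P : probability R R) (p d W : R) :
  0 < d -> 0 <= W -> (forall v, V v -> v - c v <= W) ->
  (\int[P]_(v in V) (envelope c p d v)%:E <=
   profit V c P p + W%:E * P `[(p - d)%R, p[%classic)%E.
Proof.
move=> d0 W0 surplusW; rewrite profitE.
have mgap : measurable `[p - d, p[%classic by exact: measurable_itv.
have gap_int : P.-integrable V (fun v => W%:E * (\1_`[p - d, p[ v)%:E)%E.
  apply: integrableZl => //; apply: (@integrableS _ _ _ _ setT) => //.
  exact: integrable_indic.
apply: (@le_trans _ _
    (\int[P]_(v in V) ((payoff c p v)%:E + W%:E * (\1_`[p - d, p[ v)%:E)%E)%E).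
  apply: le_integral => //; first exact: integrable_envelope.
    exact: integrableD (integrable_payoff P p) gap_int.
  move=> v /set_mem Vv; rewrite -EFinM -EFinD lee_fin.
  by apply: envelope_le_payoff => //; [exact: surplus_ge0 | exact: surplusW].
rewrite integralD //; last exact: integrable_payoff.
rewrite leeD2l ?ge0_integralZl_EFin //; last first.
  exact/measurable_EFinP/measurable_indic.
rewrite integral_indic // lee_wpmul2l ?lee_fin //.
by apply: le_measure; rewrite ?inE //; exact: measurableI.
Qed.

Lemma limn_esup_profit_le_integral_envelope (nu_ : nat -> probability R R)
    (nu : probability R R) (p_ : nat -> R) (p d : R) :
  0 < d -> weak_conv V nu_ nu -> p_ @ \oo --> p ->
  (limn_esup (fun n => profit V c (nu_ n) (p_ n)) <=
   \int[nu]_(v in V) (envelope c p d v)%:E)%E.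
Proof.
move=> d0 nu_nu p_p.
set L := (\int[nu]_(v in V) (envelope c p d v)%:E)%E.
have dist_cvg0 : `|p_ n - p| @[n --> \oo] --> 0.
  by move/subr_cvg0/cvg_norm : p_p; rewrite normr0.
have bound_cvg : (fun n => \int[nu_ n]_(v in V) (envelope c p d v)%:E
                            + `|p_ n - p|%:E)%E @ \oo --> L.
  rewrite -[L]adde0; apply: cvgeD.
  - by rewrite fin_num_adde_defl.
  - exact: nu_nu (continuous_envelope p d).
  - by apply: cvg_EFin dist_cvg0; exact: nearW.
rewrite -(cvg_limn_einf_sup bound_cvg).2; apply: le_limn_esup.
near=> n; apply: profit_le_integral_envelope => //.
by near: n; apply: cvgr_distC_lt p_p _ _; rewrite divr_gt0.
Unshelve. all: by end_near. Qed.

End profit_envelope.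

Theorem lemmaI3 (R : realType) (V : set R) (c : R -> R)
  (nu_ : nat -> probability R R) (nu : probability R R)
  (p_ : nat -> R) (p : R) :
  compact V ->
  {within V, continuous c} ->
  (forall v, V v -> 0 <= v - c v) ->
  (forall n, in_Delta V (nu_ n)) -> in_Delta V nu ->
  weak_conv V nu_ nu ->
  (forall n, V (p_ n)) -> V p ->
  p_ @ \oo --> p ->
  (limn_esup (fun n => profit V c (nu_ n) (p_ n)) <= profit V c nu p)%E.
Proof.
move=> cV cc surplus_ge0 _ _ nu_nu _ _ p_p.
have [W W0 surplusW] : exists2 W : R, 0 <= W & forall v, V v -> v - c v <= W.
  exact: continuous_compact_ubound cV (within_continuous_sub cc id (fun=> cvg_id)).
pose bound k := (profit V c nu p + W%:E * nu `[(p - k.+1%:R^-1)%R, p[%classic)%E.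
have bound_cvg : bound k @[k --> \oo] --> profit V c nu p.
  rewrite -[X in _ --> X]adde0 -(mule0 W%:E).
  apply: cvgeD; [by rewrite fin_num_adde_defl | exact: cvg_cst |].
  exact: cvgeZl (measure_itv_left_cvg0 nu p).
apply: cvge_to_ge bound_cvg _; apply: nearW => k.
have d0 : 0 < k.+1%:R^-1 :> R by rewrite invr_gt0.
apply: le_trans (integral_envelope_le_profit cV cc surplus_ge0 _ _ _ _ d0 W0 surplusW).
exact: limn_esup_profit_le_integral_envelope cV cc surplus_ge0 _ _ _ _ _ d0 nu_nu p_p.
Qed.
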